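(* Let $R$ be a commutative ring that is $\aleph_0$-self-injective. Then for any two countably generated ideals $I_1,I_2$ of $R$, $\mathrm{Ann}(I_1\cap I_2)=\mathrm{Ann}(I_1)+\mathrm{Ann}(I_2)$; that is, $R$ is an $\aleph_0$-IK ring.
   Context: $R$ is $\aleph_0$-self-injective if every $R$-homomorphism from a countably generated ideal $I$ of $R$ into $R$ extends to an $R$-homomorphism $R\to R$. For a subset $X$ of a commutative ring $R$, $\mathrm{Ann}(X)=\{r\in R: rx=0 \text{ for all } x\in X\}$. *)

From HB Require Import structures.
From mathcomp Require Import all_boot all_order all_algebra.
Set Implicit Arguments. Unset Strict Implicit. Unset Printing Implicit Defensive.
Import GRing.Theory.
Local Open Scope ring_scope.

Section Defs.
Variable R : comPzRingType.

Definition gen_ideal (g : nat -> R) : R -> Prop :=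
  fun x => exists (n : nat) (c : nat -> R), x = \sum_(i < n) c i * g i.

Definition ctbl_gen_ideal (I : R -> Prop) : Prop :=
  exists g : nat -> R, forall x, I x <-> gen_ideal g x.

(* f is an R-homomorphism from the ideal I into R (values of f outside I
   are irrelevant). *)
Definition Rhom_on (I : R -> Prop) (f : R -> R) : Prop :=
  (forall x y, I x -> I y -> f (x + y) = f x + f y) /\
  (forall r x, I x -> f (r * x) = r * f x).

Definition aleph0_self_injective : Prop :=
  forall (I : R -> Prop) (f : R -> R),
    ctbl_gen_ideal I -> Rhom_on I f ->
    exists g : R -> R, Rhom_on (fun _ => True) g /\ (forall x, I x -> g x = f x).

Definition Ann (X : R -> Prop) : R -> Prop :=
  fun r => forall x, X x -> r * x = 0.

Definition setI_R (A B : R -> Prop) : R -> Prop := fun x => A x /\ B x.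

Definition ideal_sum (A B : R -> Prop) : R -> Prop :=
  fun x => exists a b, A a /\ B b /\ x = a + b.

End Defs.

From HB Require Import structures.
From mathcomp Require Import all_boot all_order all_algebra.
From Stdlib Require Import ClassicalEpsilon.
Local Open Scope ring_scope.
Import GRing.Theory.

(* The inclusion Ann(I1) + Ann(I2) ⊆ Ann(I1 ∩ I2) holds in any ring.  For
   the converse, fix x ∈ Ann(I1 ∩ I2).  On J = I1 + I2 the rule
   f(a + b) = x a (a ∈ I1, b ∈ I2) is well defined, since two decompositions
   of the same element differ by an element of I1 ∩ I2, and it is an
   R-homomorphism J -> R.  J is countably generated (interleave generating
   families of I1 and I2), so f extends to an endomorphism g of R, which is
   multiplication by c = g 1.  Then x - c kills I1 and c kills I2, so
   x = (x - c) + c ∈ Ann(I1) + Ann(I2). *)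

Section Ideals.
Context {R : comPzRingType}.

Record is_ideal (I : R -> Prop) : Prop := IsIdeal {
  ideal0 : I 0;
  idealD : forall u v, I u -> I v -> I (u + v);
  idealM : forall r u, I u -> I (r * u)
}.
Arguments idealD {I} _ {u v}.
Arguments idealM {I} _ r {u}.

Lemma idealB (I : R -> Prop) u v : is_ideal I -> I u -> I v -> I (u - v).
Proof.
by move=> hI hu hv; apply: (idealD hI hu); rewrite -mulN1r; apply: idealM.
Qed.

Lemma ideal_sum_is_ideal {I1 I2 : R -> Prop} :
  is_ideal I1 -> is_ideal I2 -> is_ideal (ideal_sum I1 I2).
Proof.
move=> h1 h2; split.
- by exists 0, 0; rewrite addr0; split; [apply: ideal0|split; [apply: ideal0|]].
- move=> _ _ [a [b [ha [hb ->]]]] [a' [b' [ha' [hb' ->]]]].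
  exists (a + a'), (b + b'); rewrite addrACA.
  by split; [apply: idealD|split; [apply: idealD|]].
- move=> r _ [a [b [ha [hb ->]]]]; exists (r * a), (r * b); rewrite mulrDr.
  by split; [apply: idealM|split; [apply: idealM|]].
Qed.

Section GeneratedIdeal.
Variable g : nat -> R.

Lemma gen_sum_widen (c : nat -> R) {n N} : (n <= N)%N ->
  \sum_(i < n) c i * g i = \sum_(i < N) (if (i < n)%N then c i else 0) * g i.
Proof.
move=> hn; rewrite (big_ord_widen N (fun i => c i * g i) hn) big_mkcond /=.
by apply: eq_bigr => i _; case: ifP => //; rewrite mul0r.
Qed.

Lemma gen_ideal_is_ideal : is_ideal (gen_ideal g).
Proof.
split.
- by exists 0%N, (fun _ => 0); rewrite big_ord0.
- move=> _ _ [n [c ->]] [m [d ->]].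
  exists (n + m)%N, (fun i => (if (i < n)%N then c i else 0)
                            + (if (i < m)%N then d i else 0)).
  rewrite (gen_sum_widen c (leq_addr m n)) (gen_sum_widen d (leq_addl n m)).
  by rewrite -big_split; apply: eq_bigr => i _; rewrite mulrDl.
- move=> r _ [n [c ->]]; exists n, (fun i => r * c i); rewrite mulr_sumr.
  by apply: eq_bigr => i _; rewrite mulrA.
Qed.

Lemma gen_ideal_gen k : gen_ideal g (g k).
Proof.
exists k.+1, (fun i => (i == k)%:R).
rewrite big_ord_recr /= eqxx mul1r big1 ?add0r // => i _.
by rewrite (ltn_eqF (ltn_ord i)) mul0r.
Qed.

Lemma gen_ideal_min (I : R -> Prop) :
  is_ideal I -> (forall k, I (g k)) -> forall y, gen_ideal g y -> I y.
Proof.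
move=> hI hg _ [n [c ->]]; elim: n => [|n IH].
  by rewrite big_ord0; apply: ideal0.
by rewrite big_ord_recr /=; apply: idealD => //; apply: idealM.
Qed.

End GeneratedIdeal.
Arguments gen_ideal_min {g I}.

Lemma ctbl_gen_ideal_is_ideal {I : R -> Prop} : ctbl_gen_ideal I -> is_ideal I.
Proof.
move=> [g hg]; have hgen := gen_ideal_is_ideal g.
split; first by apply/hg; apply: ideal0.
- by move=> u v /hg hu /hg hv; apply/hg; apply: idealD.
- by move=> r u /hg hu; apply/hg; apply: idealM.
Qed.

Definition interleave (g1 g2 : nat -> R) : nat -> R :=
  fun n => if odd n then g2 n./2 else g1 n./2.

Lemma gen_ideal_interleave (g1 g2 : nat -> R) y :
  gen_ideal (interleave g1 g2) y <->
  ideal_sum (gen_ideal g1) (gen_ideal g2) y.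
Proof.
have hsum := ideal_sum_is_ideal (gen_ideal_is_ideal g1) (gen_ideal_is_ideal g2).
have hgen := gen_ideal_is_ideal (interleave g1 g2).
split.
  apply: gen_ideal_min => // k; rewrite /interleave; case: (odd k).
    exists 0, (g2 k./2); rewrite add0r.
    by split; [exact: ideal0 (gen_ideal_is_ideal g1)|split; [exact: gen_ideal_gen|]].
  exists (g1 k./2), 0; rewrite addr0.
  by split; [exact: gen_ideal_gen|split; [exact: ideal0 (gen_ideal_is_ideal g2)|]].
move=> [a [b [ha [hb ->]]]]; apply: idealD => //.
  apply: (gen_ideal_min hgen _ _ ha) => k.
  have -> : g1 k = interleave g1 g2 k.*2 by rewrite /interleave odd_double doubleK.
  exact: gen_ideal_gen.
apply: (gen_ideal_min hgen _ _ hb) => k.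
have -> : g2 k = interleave g1 g2 k.*2.+1.
  by rewrite /interleave /= odd_double /= uphalf_double.
exact: gen_ideal_gen.
Qed.

Lemma ctbl_gen_ideal_sum {I1 I2 : R -> Prop} :
  ctbl_gen_ideal I1 -> ctbl_gen_ideal I2 -> ctbl_gen_ideal (ideal_sum I1 I2).
Proof.
move=> [g1 hg1] [g2 hg2]; exists (interleave g1 g2) => y.
rewrite gen_ideal_interleave.
split=> -[a [b [ha [hb e]]]]; exists a, b.
  by split; [apply/hg1|split; [apply/hg2|]].
by split; [apply/hg1|split; [apply/hg2|]].
Qed.

Lemma Rhom_total_mul {g : R -> R} :
  Rhom_on (fun _ => True) g -> forall r, g r = r * g 1.
Proof. by move=> [_ gM] r; rewrite -{1}(mulr1 r) gM. Qed.

Lemma ann_sum_sub_ann_inter (I1 I2 : R -> Prop) x :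
  ideal_sum (Ann I1) (Ann I2) x -> Ann (setI_R I1 I2) x.
Proof. by move=> [a [b [ha [hb ->]]]] y [y1 y2]; rewrite mulrDl ha // hb // addr0. Qed.

End Ideals.
Arguments ideal0 {R I}.
Arguments idealD {R I} _ {u v}.
Arguments idealM {R I} _ r {u}.

Section AnnFunctional.
Context {R : comPzRingType} {I1 I2 : R -> Prop}.
Hypotheses (hI1 : is_ideal I1) (hI2 : is_ideal I2).
Context {x : R}.
Hypothesis hx : Ann (setI_R I1 I2) x.

(* Two decompositions of an element of I1 + I2 differ by an element of
   I1 ∩ I2, which x annihilates; hence x a depends only on a + b. *)
Lemma ann_inter_compatible {a b a' b'} :
  I1 a -> I2 b -> I1 a' -> I2 b' -> a + b = a' + b' -> x * a = x * a'.
Proof.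
move=> ha hb ha' hb' e; apply/eqP; rewrite -subr_eq0 -mulrBr; apply/eqP.
apply: hx; split; first exact: idealB.
have -> : a - a' = b' - b.
  by apply/eqP; rewrite subr_eq -(addrK b a) e (addrC a') addrAC.
exact: idealB.
Qed.

Definition first_summand (y : R) : R :=
  epsilon (inhabits 0) (fun a => I1 a /\ exists b, I2 b /\ y = a + b).

Lemma first_summandP y : ideal_sum I1 I2 y ->
  I1 (first_summand y) /\ exists b, I2 b /\ y = first_summand y + b.
Proof.
move=> [a [b [ha [hb e]]]].
apply: (epsilon_spec (inhabits 0) (fun a => I1 a /\ exists b, I2 b /\ y = a + b)).
by exists a; split=> //; exists b.
Qed.

Definition ann_functional (y : R) : R := x * first_summand y.

Lemma ann_functionalE a b : I1 a -> I2 b -> ann_functional (a + b) = x * a.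
Proof.
move=> ha hb.
have [ha' [b' [hb' e]]] : I1 (first_summand (a + b)) /\
    exists b', I2 b' /\ a + b = first_summand (a + b) + b'.
  by apply: first_summandP; exists a, b.
exact: (ann_inter_compatible ha' hb' ha hb (esym e)).
Qed.

Lemma ann_functional_hom : Rhom_on (ideal_sum I1 I2) ann_functional.
Proof.
split.
  move=> _ _ [a [b [ha [hb ->]]]] [a' [b' [ha' [hb' ->]]]].
  have haa' := idealD hI1 ha ha'; have hbb' := idealD hI2 hb hb'.
  by rewrite addrACA !ann_functionalE ?mulrDr.
move=> r _ [a [b [ha [hb ->]]]].
have hra := idealM hI1 r ha; have hrb := idealM hI2 r hb.
by rewrite mulrDr !ann_functionalE // mulrCA.
Qed.

(* If the functional extends to R, then x ∈ Ann(I1) + Ann(I2): with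
   c = g 1 we get (x - c) a = 0 on I1 and c b = 0 on I2. *)
Lemma ann_sum_of_extension (g : R -> R) :
  Rhom_on (fun _ => True) g ->
  (forall y, ideal_sum I1 I2 y -> g y = ann_functional y) ->
  ideal_sum (Ann I1) (Ann I2) x.
Proof.
move=> gR gf; have gE := Rhom_total_mul gR.
have h10 := ideal0 hI1; have h20 := ideal0 hI2.
exists (x - g 1), (g 1); split; last split; last by rewrite subrK.
  move=> a ha.
  have Ja : ideal_sum I1 I2 a by exists a, 0; rewrite addr0.
  have := gf a Ja; rewrite gE -{2}(addr0 a) ann_functionalE // => e.
  by rewrite mulrBl (mulrC (g 1)) e subrr.
move=> b hb.
have Jb : ideal_sum I1 I2 b by exists 0, b; rewrite add0r.
have := gf b Jb; rewrite gE -{2}(add0r b) ann_functionalE // mulr0 => e.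
by rewrite mulrC.
Qed.

End AnnFunctional.

Theorem lemma2p2 (R : comPzRingType) :
  aleph0_self_injective R ->
  forall I1 I2 : R -> Prop,
    ctbl_gen_ideal I1 -> ctbl_gen_ideal I2 ->
    forall x : R, Ann (setI_R I1 I2) x <-> ideal_sum (Ann I1) (Ann I2) x.
Proof.
move=> inj I1 I2 hc1 hc2 x; split; last exact: ann_sum_sub_ann_inter.
move=> hx.
have hI1 := ctbl_gen_ideal_is_ideal hc1.
have hI2 := ctbl_gen_ideal_is_ideal hc2.
have [g [gR gf]] := inj _ _ (ctbl_gen_ideal_sum hc1 hc2)
  (ann_functional_hom hI1 hI2 hx).
exact: (ann_sum_of_extension hI1 hI2 hx g gR gf).
Qed.
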